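(* Let $G=(V,E)$ be an undirected graph (finite or infinite) and $M=M(S)$ a multiplex of $G$ generated by the simplex $S=(V_S,E_S)$. Then $M$ is maximal if and only if the set $\widetilde M$ of vertices spanned by $M$ is a ``strong'' partitive set of $G$.
   Context: A graph $G=(V,E)$ has vertex set $V$ and edge set $E\subseteq V^2$; it is undirected if $E$ is irreflexive and symmetric; $ab$ denotes $\{(a,b),(b,a)\}$. For a set $A$ of ordered pairs, $\widetilde A$ is the set of vertices $a$ with $(a,b)\in A$ or $(b,a)\in A$ for some $b$. A set $X\subseteq V$ is a partitive set of $G$ if for all $a,b\in X$ and $c\in V\setminus X$: $(a,c)\in E\Leftrightarrow(b,c)\in E$ and $(c,a)\in E\Leftrightarrow(c,b)\in E$; $I(G)$ is the class of partitive sets. A ``strong'' partitive set is an $X\in I(G)$ such that for every $Y\in I(G)$ with $X\cap Y\neq\emptyset$, $X\subseteq Y$ or $Y\subseteq X$. Implication classes: on $E$ define $(a,b)\Gamma(a',b')$ iff either $a=a'$ and $(b,b')\notin E$, or $b=b'$ and $(a,a')\notin E$; the classes of the transitive closure $\Gamma^*$ are the implication classes. For an implication class $A$, $A^{-1}=\{(b,a):(a,b)\in A\}$ and the color class is $\widehat A=A\cup A^{-1}$. A simplex of rank $r\ge1$ is a complete sub-graph $S=(V_S,E_S)$ of $G$ on $r+1$ vertices whose distinct undirected edges lie in distinct color classes; it is maximal if not properly contained in a larger simplex. The multiplex generated by $S$ is $M(S)=\bigcup\{\widehat A:\widehat A\text{ a color class},\ \widehat A\cap E_S\neq\emptyset\}$;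 the multiplex is maximal if $S$ is maximal. *)

From Stdlib Require Import List Relations.
Import ListNotations.

Section Gallai.
Context {V : Type}.
Variable E : V -> V -> Prop.

Definition undirected : Prop :=
  (forall a, ~ E a a) /\ (forall a b, E a b -> E b a).

Definition inE (p : V * V) : Prop := E (fst p) (snd p).

Definition partitive (X : V -> Prop) : Prop :=
  forall a b c, X a -> X b -> ~ X c ->
    (E a c <-> E b c) /\ (E c a <-> E c b).

Definition strong_partitive (X : V -> Prop) : Prop :=
  partitive X /\
  forall Y : V -> Prop, partitive Y -> (exists x, X x /\ Y x) ->
    (forall x, X x -> Y x) \/ (forall x, Y x -> X x).

Definition Gamma (p q : V * V) : Prop :=
  inE p /\ inE q /\
  ((fst p = fst q /\ ~ E (snd p) (snd q)) \/
   (snd p = snd q /\ ~ E (fst p) (fst q))).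

(* Gamma^*: transitive closure; its classes on E are the implication classes.
   Gamma is reflexive on E (E irreflexive), so the class of an edge e is
   {q | Gamma^* e q}. *)
Definition Gstar : V * V -> V * V -> Prop := clos_trans (V * V) Gamma.

Definition implication_class (e : V * V) (q : V * V) : Prop := Gstar e q.

Definition swap (p : V * V) : V * V := (snd p, fst p).

Definition color_class (e : V * V) (q : V * V) : Prop :=
  implication_class e q \/ implication_class e (swap q).

Definition same_set {T} (P Q : T -> Prop) : Prop := forall x, P x <-> Q x.

(* A simplex is given by its (finite) vertex set VS; its edge set E_S is
   all ordered pairs of distinct vertices of VS (it is complete). *)
Definition simplex_edge (VS : V -> Prop) (p : V * V) : Prop :=
  VS (fst p) /\ VS (snd p) /\ fst p <> snd p.

Definition simplex (VS : V -> Prop) : Prop :=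
  (exists l : list V, NoDup l /\ forall x, VS x <-> In x l) /\
  (* rank r >= 1, i.e. at least 2 vertices *)
  (exists a b, VS a /\ VS b /\ a <> b) /\
  (forall a b, VS a -> VS b -> a <> b -> E a b) /\
  (forall a b c d, VS a -> VS b -> VS c -> VS d -> a <> b -> c <> d ->
     ~ ((a = c /\ b = d) \/ (a = d /\ b = c)) ->
     ~ same_set (color_class (a, b)) (color_class (c, d))).

Definition maximal_simplex (VS : V -> Prop) : Prop :=
  simplex VS /\
  forall VS' : V -> Prop, simplex VS' -> (forall x, VS x -> VS' x) ->
    same_set VS VS'.

Definition multiplex (VS : V -> Prop) (q : V * V) : Prop :=
  exists e, inE e /\ color_class e q /\
    exists f, simplex_edge VS f /\ color_class e f.

Definition maximal_multiplex (M : V * V -> Prop) : Prop :=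
  exists VS, maximal_simplex VS /\ same_set M (multiplex VS).

Definition spanned (A : V * V -> Prop) (a : V) : Prop :=
  exists b, A (a, b) \/ A (b, a).

End Gallai.

From Stdlib Require Import List Relations Classical.

(* Partitive sets are closed under implication classes, so the vertex set X
   spanned by M(S) is the least partitive set containing V_S.

   Let S be maximal and let a partitive set Y overlap X, with q in X \ Y and r
   in Y \ X.  By minimality of X, V_S meets both X /\ Y and X \ Y, which
   forces all edges between the parts X /\ Y, X \ Y and Y \ X to be present;
   in particular r is joined to all of V_S.  For s in V_S the edge sr crosses a
   complete cut A | B of a partitive set (A = X /\ Y inside Y, or A = X \ Y
   inside the symmetric difference of X and Y).  Its implication class stays in
   A x B and moves its first end only along non-edges of A; since A is joined
   to some t0 in V_S \ A, edges sr and s'r in one colour class would put st0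
   and s't0 in one colour class.  So V_S + r is a larger simplex.

   Conversely, let v lie in a larger simplex S'.  In a simplex, every edge of
   the implication class of tu has both ends adjacent to any third vertex c,
   so the class never reaches c.  Hence for s in V_S the vertices spanned by
   the colour class of sv form a partitive set that meets X but neither
   contains X nor is contained in it. *)

Section Gallai.
Context {V : Type} (E : V -> V -> Prop).
Hypothesis E_irrefl : forall a, ~ E a a.
Hypothesis E_sym : forall a b, E a b -> E b a.

Lemma E_comm a b : E a b <-> E b a.
Proof. split; apply E_sym. Qed.

Lemma Gamma_fst a b b' : E a b -> E a b' -> ~ E b b' -> Gamma E (a, b) (a, b').
Proof. intros hab hab' n. split; [exact hab|]. split; [exact hab'|]. left; auto. Qed.

Lemma Gamma_snd a a' b : E a b -> E a' b -> ~ E a a' -> Gamma E (a, b) (a', b).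
Proof. intros hab ha'b n. split; [exact hab|]. split; [exact ha'b|]. right; auto. Qed.

Lemma Gstar_inE p q : Gstar E p q -> inE E p /\ inE E q.
Proof.
  induction 1 as [p q [hp [hq _]] | p q r _ [hp _] _ [_ hr]]; auto.
Qed.

Lemma Gstar_refl p : inE E p -> Gstar E p p.
Proof. intro hp. apply t_step. split; [exact hp|]. split; [exact hp|]. left; auto. Qed.

Lemma Gstar_sym p q : Gstar E p q -> Gstar E q p.
Proof.
  induction 1 as [p q [hp [hq [[e n] | [e n]]]] | p q r _ IH1 _ IH2].
  - apply t_step. split; [exact hq|]. split; [exact hp|]. left; split; auto.
  - apply t_step. split; [exact hq|]. split; [exact hp|]. right; split; auto.
  - exact (t_trans _ _ _ _ _ IH2 IH1).
Qed.

Lemma Gstar_swap p q : Gstar E p q -> Gstar E (swap p) (swap q).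
Proof.
  induction 1 as [p q [hp [hq [h | h]]] | p q r _ IH1 _ IH2].
  - apply t_step. split; [exact (E_sym _ _ hp)|]. split; [exact (E_sym _ _ hq)|]. right; exact h.
  - apply t_step. split; [exact (E_sym _ _ hp)|]. split; [exact (E_sym _ _ hq)|]. left; exact h.
  - exact (t_trans _ _ _ _ _ IH1 IH2).
Qed.

Lemma swap_involutive (p : V * V) : swap (swap p) = p.
Proof. destruct p; reflexivity. Qed.

Lemma Gstar_invariant (P : V * V -> Prop) e :
  P e -> (forall q q', Gstar E e q -> P q -> Gamma E q q' -> P q') ->
  forall q, Gstar E e q -> P q.
Proof.
  intros He step q hq.
  assert (hee : Gstar E e e) by exact (Gstar_refl e (proj1 (Gstar_inE e q hq))).
  apply clos_trans_tn1 in hq.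
  induction hq as [q hg | q q' hg hq IH].
  - exact (step e q hee He hg).
  - exact (step q q' (clos_tn1_trans _ _ _ _ hq) IH hg).
Qed.

Lemma color_class_refl p : inE E p -> color_class E p p.
Proof. intro hp. left. exact (Gstar_refl p hp). Qed.

Lemma color_class_sym p q : color_class E p q -> color_class E q p.
Proof.
  intros [h | h].
  - left. exact (Gstar_sym p q h).
  - right. rewrite <- (swap_involutive q). exact (Gstar_swap _ _ (Gstar_sym _ _ h)).
Qed.

Lemma color_class_trans p q r :
  color_class E p q -> color_class E q r -> color_class E p r.
Proof.
  intros [hpq | hpq] [hqr | hqr].
  - left. exact (t_trans _ _ _ _ _ hpq hqr).
  - right. exact (t_trans _ _ _ _ _ hpq hqr).
  - right. exact (t_trans _ _ _ _ _ hpq (Gstar_swap _ _ hqr)).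
  - left. apply (t_trans _ _ _ _ _ hpq).
    rewrite <- (swap_involutive r). exact (Gstar_swap _ _ hqr).
Qed.

Lemma same_color_class p q :
  color_class E p q -> same_set (color_class E p) (color_class E q).
Proof.
  intros hpq x. split; intro h.
  - exact (color_class_trans _ _ _ (color_class_sym _ _ hpq) h).
  - exact (color_class_trans _ _ _ hpq h).
Qed.

Lemma spanned_mono (A B : V * V -> Prop) :
  (forall q, A q -> B q) -> forall w, spanned A w -> spanned B w.
Proof. intros H w [b [h | h]]; exists b; auto. Qed.

Lemma spanned_color_class_ends a b :
  E a b -> spanned (color_class E (a, b)) a /\ spanned (color_class E (a, b)) b.
Proof.
  intro hab. split; [exists b; left | exists a; right]; exact (color_class_refl (a, b) hab).
Qed.

Lemma partitive_intro X :
  (forall a b c, X a -> X b -> ~ X c -> (E a c <-> E b c)) -> partitive E X.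
Proof.
  intros H a b c ha hb hc. split; [auto|].
  rewrite (E_comm c a), (E_comm c b). auto.
Qed.

Lemma partitive_adj X a b c :
  partitive E X -> X a -> X b -> ~ X c -> (E a c <-> E b c).
Proof. intros HX ha hb hc. exact (proj1 (HX a b c ha hb hc)). Qed.

Lemma partitive_inter X Y :
  partitive E X -> partitive E Y -> partitive E (fun x => X x /\ Y x).
Proof.
  intros HX HY. apply partitive_intro. intros a b c [hXa hYa] [hXb hYb] hc.
  destruct (classic (X c)) as [hXc | hXc].
  - apply (partitive_adj Y); auto.
  - apply (partitive_adj X); auto.
Qed.

Lemma partitive_Gstar_closed Z p q :
  partitive E Z -> Gstar E p q -> Z (fst p) -> Z (snd p) -> Z (fst q) /\ Z (snd q).
Proof.
  intros HZ hpq hp1 hp2. revert q hpq.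
  apply (Gstar_invariant (fun q => Z (fst q) /\ Z (snd q))); [auto|].
  intros [x y] [x' y'] _ [hx hy] [_ [hx'y' hg]]. unfold inE in hx'y'. cbn in *.
  destruct hg as [[<- n] | [<- n]]; split; auto; apply NNPP; intro hc; apply n.
  - apply (partitive_adj Z x y y' HZ hx hy hc), hx'y'.
  - apply (partitive_adj Z y x x' HZ hy hx hc), E_sym, hx'y'.
Qed.

Lemma Gstar_ends_adj_outside e c q :
  ~ spanned (color_class E e) c -> Gstar E e q -> (E (fst q) c <-> E (snd q) c).
Proof.
  intros hc hq. destruct q as [x y]. cbn.
  pose proof (proj2 (Gstar_inE _ _ hq)) as hxy. unfold inE in hxy. cbn in hxy.
  split; intro h; apply NNPP; intro n; apply hc.
  - exists x. right. left. exact (t_trans _ _ _ _ _ hq (t_step _ _ _ _ (Gamma_fst x y c hxy h n))).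
  - exists y. left. left.
    exact (t_trans _ _ _ _ _ hq (t_step _ _ _ _ (Gamma_snd x c y hxy (E_sym _ _ h) n))).
Qed.

Lemma Gstar_fst_adj_outside e c q :
  ~ spanned (color_class E e) c -> Gstar E e q -> (E (fst q) c <-> E (fst e) c).
Proof.
  intro hc. apply (Gstar_invariant (fun q => E (fst q) c <-> E (fst e) c)); [reflexivity|].
  intros [x y] [x' y'] hq IH hg.
  pose proof (t_trans _ _ _ _ _ hq (t_step _ _ _ _ hg)) as hq'.
  pose proof (Gstar_ends_adj_outside e c _ hc hq) as ends.
  pose proof (Gstar_ends_adj_outside e c _ hc hq') as ends'.
  destruct hg as [_ [_ hg]]. cbn in *.
  destruct hg as [[<- _] | [<- _]]; tauto.
Qed.

Lemma spanned_color_class_adj e c w :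
  ~ spanned (color_class E e) c -> spanned (color_class E e) w -> (E w c <-> E (fst e) c).
Proof.
  intros hc [b [[h | h] | [h | h]]];
    pose proof (Gstar_fst_adj_outside e c _ hc h);
    pose proof (Gstar_ends_adj_outside e c _ hc h); cbn in *; tauto.
Qed.

Lemma partitive_spanned_color_class e : partitive E (spanned (color_class E e)).
Proof.
  apply partitive_intro. intros a b c ha hb hc.
  rewrite (spanned_color_class_adj e c a hc ha), (spanned_color_class_adj e c b hc hb).
  reflexivity.
Qed.

Lemma Gstar_triangle_adj t u c q :
  E t u -> E t c -> E u c ->
  ~ Gstar E (t, u) (t, c) -> ~ Gstar E (t, u) (c, u) ->
  Gstar E (t, u) q -> E (fst q) c /\ E (snd q) c.
Proof.
  intros htu htc huc n1 n2 hq.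
  enough (H : E (fst q) c /\ E (snd q) c /\
              Gstar E (t, c) (fst q, c) /\ Gstar E (u, c) (snd q, c)) by tauto.
  revert q hq.
  apply (Gstar_invariant (fun q => E (fst q) c /\ E (snd q) c /\
           Gstar E (t, c) (fst q, c) /\ Gstar E (u, c) (snd q, c))).
  { cbn. repeat split; auto; apply Gstar_refl; assumption. }
  intros [x y] [x' y'] hq [hxc [hyc [hx hy]]] hg. cbn in *.
  pose proof (t_trans _ _ _ _ _ hq (t_step _ _ _ _ hg)) as hq'.
  destruct hg as [_ [hx'y' hg]]. unfold inE in hx'y'. cbn in hg, hx'y'.
  destruct hg as [[<- n] | [<- n]].
  - assert (hy'c : E y' c).
    { apply NNPP; intro n'. apply n1.
      apply (t_trans _ _ _ (x, c)); [|exact (Gstar_sym _ _ hx)].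
      exact (t_trans _ _ _ _ _ hq' (t_step _ _ _ _ (Gamma_fst x y' c hx'y' hxc n'))). }
    repeat split; auto.
    exact (t_trans _ _ _ _ _ hy (t_step _ _ _ _ (Gamma_snd y y' c hyc hy'c n))).
  - assert (hx'c : E x' c).
    { apply NNPP; intro n'. apply n2.
      apply (t_trans _ _ _ (c, y)); [|exact (Gstar_swap _ _ (Gstar_sym _ _ hy))].
      exact (t_trans _ _ _ _ _ hq' (t_step _ _ _ _ (Gamma_snd x' c y hx'y' (E_sym _ _ hyc) n'))). }
    repeat split; auto.
    exact (t_trans _ _ _ _ _ hx (t_step _ _ _ _ (Gamma_snd x x' c hxc hx'c n))).
Qed.

Lemma simplex_Gstar_same_edge VS a b c d :
  simplex E VS -> VS a -> VS b -> VS c -> VS d -> a <> b -> c <> d ->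
  Gstar E (a, b) (c, d) -> (a = c /\ b = d) \/ (a = d /\ b = c).
Proof.
  intros [_ [_ [_ hcol]]] ha hb hc hd hab hcd h. apply NNPP; intro hne.
  exact (hcol a b c d ha hb hc hd hab hcd hne (same_color_class _ _ (or_introl h))).
Qed.

Lemma simplex_colors_of_Gstar VS :
  (forall a b, VS a -> VS b -> a <> b -> E a b) ->
  (forall a b c d, VS a -> VS b -> VS c -> VS d -> a <> b -> c <> d ->
     Gstar E (a, b) (c, d) -> (a = c /\ b = d) \/ (a = d /\ b = c)) ->
  forall a b c d, VS a -> VS b -> VS c -> VS d -> a <> b -> c <> d ->
    ~ ((a = c /\ b = d) \/ (a = d /\ b = c)) ->
    ~ same_set (color_class E (a, b)) (color_class E (c, d)).
Proof.
  intros hcl H a b c d ha hb hc hd hab hcd hne hsame.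
  destruct (proj2 (hsame (c, d)) (color_class_refl (c, d) (hcl c d hc hd hcd))) as [h | h].
  - exact (hne (H a b c d ha hb hc hd hab hcd h)).
  - destruct (H a b d c ha hb hd hc hab (not_eq_sym hcd) h); tauto.
Qed.

Lemma simplex_apex_not_spanned VS t u c :
  simplex E VS -> VS t -> VS u -> VS c -> t <> u -> t <> c -> u <> c ->
  ~ spanned (color_class E (t, u)) c.
Proof.
  intros hS ht hu hc htu htc huc.
  pose proof hS as [_ [_ [hcl _]]].
  assert (avoid : forall q, Gstar E (t, u) q -> fst q <> c /\ snd q <> c).
  { intros q hq.
    destruct (Gstar_triangle_adj t u c q) as [h1 h2]; auto.
    - intro h. destruct (simplex_Gstar_same_edge VS t u t c hS ht hu ht hc htu htc h); tauto.
    - intro h. destruct (simplex_Gstar_same_edge VS t u c u hS ht hu hc hu htu (not_eq_sym huc) h);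
        tauto.
    - split; intros <-; eapply E_irrefl; eassumption. }
  intros [b [[h | h] | [h | h]]]; destruct (avoid _ h); cbn in *; congruence.
Qed.

Lemma multiplex_inv VS q :
  multiplex E VS q -> exists t u, VS t /\ VS u /\ t <> u /\ color_class E (t, u) q.
Proof.
  intros [e [_ [heq [[t u] [[ht [hu htu]] hef]]]]]. exists t, u.
  repeat split; auto. exact (color_class_trans _ _ _ (color_class_sym _ _ hef) heq).
Qed.

Lemma multiplex_intro VS t u :
  VS t -> VS u -> t <> u -> E t u -> forall q, color_class E (t, u) q -> multiplex E VS q.
Proof.
  intros ht hu htu hE q hq. exists (t, u). split; [exact hE|]. split; [exact hq|].
  exists (t, u). split; [split; auto | exact (color_class_refl (t, u) hE)].
Qed.

Lemma spanned_multiplex_inv VS w :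
  spanned (multiplex E VS) w ->
  exists t u, VS t /\ VS u /\ t <> u /\ spanned (color_class E (t, u)) w.
Proof.
  intros [b [h | h]]; destruct (multiplex_inv VS _ h) as (t & u & ht & hu & htu & hq);
    exists t, u; repeat split; auto; exists b; auto.
Qed.

Lemma simplex_spanned_multiplex VS :
  simplex E VS -> forall t, VS t -> spanned (multiplex E VS) t.
Proof.
  intros [_ [[a [b [ha [hb hab]]]] [hcl _]]] t ht.
  assert (hu : exists u, VS u /\ t <> u)
    by (destruct (classic (t = a)) as [-> | hta]; [exists b | exists a]; auto).
  destruct hu as [u [hu htu]].
  exists u. left. apply (multiplex_intro VS t u); auto.
  exact (color_class_refl (t, u) (hcl t u ht hu htu)).
Qed.

Lemma spanned_multiplex_least VS Z :
  partitive E Z -> (forall t, VS t -> Z t) -> forall w, spanned (multiplex E VS) w -> Z w.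
Proof.
  intros HZ hVZ w hw.
  destruct (spanned_multiplex_inv VS w hw) as (t & u & ht & hu & _ & b & [[h | h] | [h | h]]);
    destruct (partitive_Gstar_closed Z _ _ HZ h (hVZ t ht) (hVZ u hu)); cbn in *; auto.
Qed.

Lemma partitive_spanned_multiplex VS : simplex E VS -> partitive E (spanned (multiplex E VS)).
Proof.
  intros hS. pose proof hS as [_ [[s0 [_ [hs0 _]]] [hcl _]]].
  assert (key : forall c w, ~ spanned (multiplex E VS) c -> spanned (multiplex E VS) w ->
                  (E w c <-> E s0 c)).
  { intros c w hc hw.
    assert (outside : forall t u, VS t -> VS u -> t <> u -> ~ spanned (color_class E (t, u)) c).
    { intros t u ht hu htu hct. apply hc. revert hct. apply spanned_mono.
      exact (multiplex_intro VS t u ht hu htu (hcl t u ht hu htu)). }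
    destruct (spanned_multiplex_inv VS w hw) as (t & u & ht & hu & htu & hwt).
    rewrite (spanned_color_class_adj _ c w (outside t u ht hu htu) hwt). cbn.
    destruct (classic (t = s0)) as [-> | hts]; [reflexivity|].
    destruct (spanned_color_class_ends t s0 (hcl t s0 ht hs0 hts)) as [_ hs].
    symmetry. exact (spanned_color_class_adj _ c s0 (outside t s0 ht hs0 hts) hs). }
  apply partitive_intro. intros a b c ha hb hc.
  rewrite (key c a hc ha), (key c b hc hb). reflexivity.
Qed.

Lemma maximal_of_strong_partitive VS :
  simplex E VS -> strong_partitive E (spanned (multiplex E VS)) -> maximal_simplex E VS.
Proof.
  intros hS [_ hstrong]. split; [exact hS|].
  intros VS' hS' hsub v. split; [apply hsub|]. intro hv'. apply NNPP; intro hv.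
  pose proof hS as [_ [[s [s' [hs [hs' hss']]]] _]].
  pose proof hS' as [_ [_ [hcl' _]]].
  assert (hsv : s <> v) by congruence.
  assert (hs'v : s' <> v) by congruence.
  destruct (spanned_color_class_ends s v (hcl' s v (hsub s hs) hv' hsv)) as [hYs hYv].
  destruct (hstrong _ (partitive_spanned_color_class (s, v))) as [hXY | hYX].
  - exists s. split; [apply simplex_spanned_multiplex|]; assumption.
  - apply (simplex_apex_not_spanned VS' s v s' hS' (hsub s hs) hv' (hsub s' hs') hsv hss');
      [congruence|].
    apply hXY, simplex_spanned_multiplex; assumption.
  - destruct (spanned_multiplex_inv VS v (hYX v hYv)) as (t & u & ht & hu & htu & hvt).
    apply (simplex_apex_not_spanned VS' t u v hS' (hsub t ht) (hsub u hu) hv' htu);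
      [congruence | congruence | exact hvt].
Qed.

Lemma Gstar_from_join_edge (U A : V -> Prop) t0 a0 b0 z :
  partitive E U -> (forall a, A a -> U a) ->
  (forall a b, A a -> U b -> ~ A b -> E a b) -> (forall a, A a -> E a t0) ->
  A a0 -> U b0 -> ~ A b0 -> Gstar E (a0, b0) z ->
  A (fst z) /\ U (snd z) /\ ~ A (snd z) /\ Gstar E (a0, t0) (fst z, t0).
Proof.
  intros HU hAU hjoin ht0 ha0 hb0 hb0' hz. revert z hz.
  apply (Gstar_invariant (fun z => A (fst z) /\ U (snd z) /\ ~ A (snd z) /\
                                   Gstar E (a0, t0) (fst z, t0))).
  { cbn. repeat split; auto. exact (Gstar_refl (a0, t0) (ht0 a0 ha0)). }
  intros [x y] [x' y'] _ [hx [hy [hy' hG]]] [_ [hx'y' hg]]. unfold inE in hx'y'. cbn in *.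
  destruct hg as [[<- n] | [<- n]].
  - assert (hUy' : U y').
    { apply NNPP; intro hc. apply n, (partitive_adj U x y y' HU (hAU x hx) hy hc), hx'y'. }
    assert (hAy' : ~ A y') by (intro h; apply n, E_sym, hjoin; auto).
    auto.
  - assert (hUx' : U x').
    { apply NNPP; intro hc. apply n, (partitive_adj U y x x' HU hy (hAU x hx) hc), E_sym, hx'y'. }
    assert (hAx' : A x') by (apply NNPP; intro h; apply n, hjoin; auto).
    repeat split; auto.
    exact (t_trans _ _ _ _ _ hG (t_step _ _ _ _ (Gamma_snd x x' t0 (ht0 x hx) (ht0 x' hAx') n))).
Qed.

Lemma join_edges_distinct_classes VS (U A : V -> Prop) t0 r s :
  simplex E VS -> partitive E U -> (forall a, A a -> U a) ->
  (forall a b, A a -> U b -> ~ A b -> E a b) -> (forall a, A a -> E a t0) ->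
  VS t0 -> ~ A t0 -> U r -> ~ A r -> VS s -> A s ->
  forall s', VS s' -> s <> s' -> ~ Gstar E (s, r) (s', r) /\ ~ Gstar E (s, r) (r, s').
Proof.
  intros hS HU hAU hjoin ht0 hVt0 hAt0 hUr hAr hVs hAs s' hVs' hss'.
  split; intro h;
    destruct (Gstar_from_join_edge U A t0 s r _ HU hAU hjoin ht0 hAs hUr hAr h)
      as [hA [_ [_ hG]]]; cbn in *; [|contradiction].
  assert (hst0 : s <> t0) by congruence.
  assert (hs't0 : s' <> t0) by congruence.
  destruct (simplex_Gstar_same_edge VS s t0 s' t0 hS hVs hVt0 hVs' hVt0 hst0 hs't0 hG); tauto.
Qed.

Lemma Gstar_from_new_edge VS Z r s q :
  partitive E Z -> (forall s, VS s -> Z s) -> ~ Z r ->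
  (forall s s', VS s -> VS s' -> s <> s' ->
     ~ Gstar E (s, r) (s', r) /\ ~ Gstar E (s, r) (r, s')) ->
  VS s -> Gstar E (s, r) q ->
  (VS (fst q) \/ fst q = r) -> (VS (snd q) \/ snd q = r) -> fst q <> snd q ->
  q = (s, r) \/ q = (r, s).
Proof.
  intros HZ hVZ hZr hnew hs hq hx hy hxy. destruct q as [x y]. cbn in *.
  destruct hx as [hx | ->], hy as [hy | ->].
  - destruct (partitive_Gstar_closed Z _ _ HZ (Gstar_sym _ _ hq) (hVZ x hx) (hVZ y hy)).
    contradiction.
  - destruct (classic (s = x)) as [-> | hsx]; [auto|]. exfalso; exact (proj1 (hnew s x hs hx hsx) hq).
  - destruct (classic (s = y)) as [-> | hsy]; [auto|]. exfalso; exact (proj2 (hnew s y hs hy hsy) hq).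
  - contradiction.
Qed.

Lemma simplex_add_vertex VS Z r :
  simplex E VS -> partitive E Z -> (forall s, VS s -> Z s) -> ~ Z r ->
  (forall s, VS s -> E s r) ->
  (forall s s', VS s -> VS s' -> s <> s' ->
     ~ Gstar E (s, r) (s', r) /\ ~ Gstar E (s, r) (r, s')) ->
  simplex E (fun x => VS x \/ x = r).
Proof.
  intros hS HZ hVZ hZr hadj hnew.
  pose proof hS as [[l [hnd hl]] [[a [b [ha [hb hab]]]] [hcl _]]].
  assert (hVr : ~ VS r) by (intro h; exact (hZr (hVZ r h))).
  assert (hcl' : forall x y, VS x \/ x = r -> VS y \/ y = r -> x <> y -> E x y).
  { intros x y [hx | ->] [hy | ->] hxy; auto; congruence. }
  split; [|split; [|split]].
  - exists (r :: l). split.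
    + constructor; [rewrite <- hl|]; assumption.
    + intro x. cbn. rewrite <- hl. split; intros [h | h]; subst; auto.
  - exists a, b. auto.
  - exact hcl'.
  - apply (simplex_colors_of_Gstar _ hcl').
    intros x y z w hx hy hz hw hxy hzw h.
    destruct hx as [hx | ->], hy as [hy | ->]; [| | | contradiction].
    + destruct (partitive_Gstar_closed Z _ _ HZ h (hVZ x hx) (hVZ y hy)) as [hZz hZw].
      cbn in *.
      destruct hz as [hz | ->]; [|contradiction]. destruct hw as [hw | ->]; [|contradiction].
      exact (simplex_Gstar_same_edge VS x y z w hS hx hy hz hw hxy hzw h).
    + destruct (Gstar_from_new_edge VS Z r x (z, w) HZ hVZ hZr hnew hx h hz hw hzw) as [e | e];
        injection e; intros; subst; auto.
    + pose proof (Gstar_swap _ _ h) as h'. cbn in h'.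
      destruct (Gstar_from_new_edge VS Z r y (w, z) HZ hVZ hZr hnew hy h' hw hz (not_eq_sym hzw))
        as [e | e]; injection e; intros; subst; auto.
Qed.

Lemma strong_partitive_ext X X' :
  (forall x, X x <-> X' x) -> strong_partitive E X -> strong_partitive E X'.
Proof.
  intros H [hX hstrong]. split.
  - intros a b c ha hb hc. apply hX; [apply H.. | rewrite H]; assumption.
  - intros Y hY [x [hx hy]].
    destruct (hstrong Y hY) as [h | h].
    + exists x. split; [apply H|]; assumption.
    + left. intros z hz. apply h, H, hz.
    + right. intros z hz. apply H, h, hz.
Qed.

Section Overlap.
Variables X Y : V -> Prop.
Hypotheses (X_part : partitive E X) (Y_part : partitive E Y).
Variables p q r : V.
Hypotheses (Xp : X p) (Yp : Y p) (Xq : X q) (Yq : ~ Y q) (Yr : Y r) (Xr : ~ X r).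

Lemma overlap_adj_inter_diffl x y : X x -> Y x -> X y -> ~ Y y -> (E x y <-> E p r).
Proof.
  intros. rewrite (partitive_adj Y x r y), (E_comm r y), (partitive_adj X y p r); auto.
  reflexivity.
Qed.

Lemma overlap_adj_inter_diffr x y : X x -> Y x -> Y y -> ~ X y -> (E x y <-> E p r).
Proof.
  intros. rewrite (partitive_adj X x q y), (E_comm q y), (partitive_adj Y y r q),
    (E_comm r q), (partitive_adj X q p r); auto.
  reflexivity.
Qed.

Lemma overlap_adj_diffl_diffr x y : X x -> ~ Y x -> Y y -> ~ X y -> (E x y <-> E p r).
Proof.
  intros. rewrite (partitive_adj X x p y); auto. apply overlap_adj_inter_diffr; auto.
Qed.

Lemma partitive_overlap_diff : partitive E (fun x => X x /\ ~ Y x).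
Proof.
  apply partitive_intro. intros a b c [hXa hYa] [hXb hYb] hc.
  destruct (classic (X c)) as [hXc | hXc].
  - assert (hYc : Y c) by (apply NNPP; intro; apply hc; split; assumption).
    rewrite (E_comm a c), (E_comm b c), (overlap_adj_inter_diffl c a), (overlap_adj_inter_diffl c b);
      auto.
    reflexivity.
  - apply (partitive_adj X); auto.
Qed.

Lemma partitive_overlap_symdiff :
  partitive E (fun x => (X x /\ ~ Y x) \/ (Y x /\ ~ X x)).
Proof.
  apply partitive_intro. intros a b c ha hb hc.
  destruct (classic (X c)) as [hXc | hXc].
  - assert (hYc : Y c) by (apply NNPP; intro; apply hc; left; split; assumption).
    assert (W : forall a, (X a /\ ~ Y a) \/ (Y a /\ ~ X a) -> (E a c <-> E p r)).
    { intros a' [[] | []]; rewrite (E_comm a' c);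
        [apply overlap_adj_inter_diffl | apply overlap_adj_inter_diffr]; assumption. }
    rewrite (W a ha), (W b hb). reflexivity.
  - assert (hYc : ~ Y c) by (intro; apply hc; right; split; assumption).
    assert (W : forall a, (X a /\ ~ Y a) \/ (Y a /\ ~ X a) -> (E a c <-> E p c)).
    { intros a' [[] | []]; [apply (partitive_adj X) | apply (partitive_adj Y)]; assumption. }
    rewrite (W a ha), (W b hb). reflexivity.
Qed.

Variable VS : V -> Prop.
Hypothesis VS_simplex : simplex E VS.
Hypothesis VS_sub_X : forall t, VS t -> X t.
Hypothesis X_least : forall Z, partitive E Z -> (forall t, VS t -> Z t) -> forall w, X w -> Z w.

Lemma overlap_simplex_meets_inter : exists t, VS t /\ Y t.
Proof.
  apply NNPP; intro hn.
  refine (proj2 (X_least _ partitive_overlap_diff _ p Xp) Yp).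
  intros t ht. split; [auto | intro; apply hn; exists t; auto].
Qed.

Lemma overlap_simplex_meets_diff : exists t, VS t /\ ~ Y t.
Proof.
  apply NNPP; intro hn. apply Yq.
  refine (proj2 (X_least _ (partitive_inter X Y X_part Y_part) _ q Xq)).
  intros t ht. split; [auto | apply NNPP; intro; apply hn; exists t; auto].
Qed.

Lemma overlap_adj_pr : E p r.
Proof.
  destruct overlap_simplex_meets_inter as [tp [hp hYp]].
  destruct overlap_simplex_meets_diff as [tq [hq hYq]].
  pose proof VS_simplex as [_ [_ [hcl _]]].
  apply (overlap_adj_inter_diffl tp tq); auto. apply hcl; congruence.
Qed.

Lemma overlap_simplex_adj_r s : VS s -> E s r.
Proof.
  intro hs. destruct (classic (Y s)).
  - apply (overlap_adj_inter_diffr s r); auto. exact overlap_adj_pr.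
  - apply (overlap_adj_diffl_diffr s r); auto. exact overlap_adj_pr.
Qed.

Lemma overlap_new_classes s s' :
  VS s -> VS s' -> s <> s' -> ~ Gstar E (s, r) (s', r) /\ ~ Gstar E (s, r) (r, s').
Proof.
  intros hs hs' hss'. pose proof overlap_adj_pr as hpr.
  destruct (classic (Y s)) as [hYs | hYs].
  - destruct overlap_simplex_meets_diff as [tq [htq hYtq]].
    apply (join_edges_distinct_classes VS Y (fun x => X x /\ Y x) tq r s); auto.
    + intros a []; assumption.
    + intros a b [] hb hab. apply (overlap_adj_inter_diffr a b); auto.
    + intros a []. apply (overlap_adj_inter_diffl a tq); auto.
    + intros []; contradiction.
    + intros []; contradiction.
  - destruct overlap_simplex_meets_inter as [tp [htp hYtp]].
    apply (join_edges_distinct_classes VS _ (fun x => X x /\ ~ Y x) tp r s VS_simplex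
             partitive_overlap_symdiff); auto.
    + intros a b [] [[] | []] hab; [tauto|]. apply (overlap_adj_diffl_diffr a b); auto.
    + intros a []. apply E_sym, (overlap_adj_inter_diffl tp a); auto.
    + intros []; contradiction.
    + intros []; contradiction.
Qed.

Lemma overlap_extend_simplex : simplex E (fun x => VS x \/ x = r).
Proof.
  apply (simplex_add_vertex VS X r VS_simplex X_part VS_sub_X Xr overlap_simplex_adj_r).
  exact overlap_new_classes.
Qed.

End Overlap.

Lemma strong_partitive_of_maximal VS :
  maximal_simplex E VS -> strong_partitive E (spanned (multiplex E VS)).
Proof.
  intros [hS hmax]. split; [exact (partitive_spanned_multiplex VS hS)|].
  intros Y hY [p [hXp hYp]]. apply NNPP; intro hn.
  apply not_or_and in hn as [n1 n2].
  apply not_all_ex_not in n1 as [q n1]. apply imply_to_and in n1 as [hXq hYq].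
  apply not_all_ex_not in n2 as [r n2]. apply imply_to_and in n2 as [hYr hXr].
  pose proof (overlap_extend_simplex _ Y (partitive_spanned_multiplex VS hS) hY p q r
                hXp hYp hXq hYq hYr hXr VS hS (simplex_spanned_multiplex VS hS)
                (spanned_multiplex_least VS)) as hext.
  destruct (hmax _ hext (fun x h => or_introl h) r) as [_ hr].
  exact (hXr (simplex_spanned_multiplex VS hS r (hr (or_intror eq_refl)))).
Qed.

End Gallai.

Theorem theorem3p9 (V : Type) (E : V -> V -> Prop) (VS : V -> Prop)
  (HG : undirected E) (HS : simplex E VS) :
  maximal_multiplex E (multiplex E VS) <->
  strong_partitive E (spanned (multiplex E VS)).
Proof.
  destruct HG as [E_irrefl E_sym]. split.
  - intros [VS' [hmax hM]].
    apply (strong_partitive_ext E (spanned (multiplex E VS'))).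
    + intro w. split; apply spanned_mono; intro; apply hM.
    + exact (strong_partitive_of_maximal E E_irrefl E_sym VS' hmax).
  - intro hstrong. exists VS. split.
    + exact (maximal_of_strong_partitive E E_irrefl E_sym VS HS hstrong).
    + intro; reflexivity.
Qed.
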